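(* Let $S_\lambda\in\mathcal B(\ell^2(V))$ be a weighted shift on a directed tree $\mathcal T=(V,E)$ with weights $\lambda=\{\lambda_v\}_{v\in V^\circ}$. Then $S_\lambda^*S_\lambda(\ker S_\lambda^* )\subseteq\ker S_\lambda^*$ if and only if there exists a family $\{\alpha_v\}_{v\in V^+_\lambda}\subseteq\mathbb R_+$ with $\|S_\lambda e_u\|=\alpha_{\mathrm{par}(u)}$ for all $u\in V^\circ$ with $\lambda_u\neq0$. Moreover, if $\mathcal T$ is leafless and all weights are nonzero, this is equivalent to the existence of $\{\alpha_v\}_{v\in V}\subseteq\mathbb R_+$ with $\|S_\lambda e_u\|=\alpha_{\mathrm{par}(u)}$ for all $u\in V^\circ$.
   Context: A directed tree $\mathcal T=(V,E)$ is a connected directed graph without circuits in which each vertex has at most one parent; a root is a vertex without parent (at most one exists). $V^\circ=V$ if $\mathcal T$ is rootless and $V^\circ=V\setminus\{\omega\}$ if $\omega$ is the root. For $v\in V^\circ$, $\mathrm{par}(v)$ is the unique $u$ with $(u,v)\in E$; $\mathrm{Chi}(u)=\{v:(u,v)\in E\}$; $\mathcal T$ is leafless if $\mathrm{Chi}(u)\neq\emptyset$ for all $u$. $e_u$ is the indicator of $\{u\}$ in $\ell^2(V)$. The weighted shift with weights $\lambda$ is $(S_\lambda f)(v)=\lambda_vf(\mathrm{par}(v))$ for $v\in V^\circ$ and $(S_\lambda f)(\omega)=0$ at the root; it is bounded iff $\sup_u\sum_{v\in\mathrm{Chi}(u)}|\lambda_v|^2<\infty$, and then $\|S_\lambda e_u\|^2=\sum_{v\in\mathrm{Chi}(u)}|\lambda_v|^2$.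 $V^+_\lambda=\{u\in V:\|S_\lambda e_u\|>0\}$. *)

From Stdlib Require Import Reals List Relations ClassicalEpsilon.
Import ListNotations.
Open Scope R_scope.

Record Cplx : Type := mkC { Re : R; Im : R }.
Definition C0 : Cplx := mkC 0 0.
Definition C1 : Cplx := mkC 1 0.
Definition Cadd (z w : Cplx) : Cplx := mkC (Re z + Re w) (Im z + Im w).
Definition Copp (z : Cplx) : Cplx := mkC (- Re z) (- Im z).
Definition Cmul (z w : Cplx) : Cplx :=
  mkC (Re z * Re w - Im z * Im w) (Re z * Im w + Im z * Re w).
Definition Cconj (z : Cplx) : Cplx := mkC (Re z) (- Im z).
Definition Cnorm2 (z : Cplx) : R := Re z * Re z + Im z * Im z.

Definition sumR {V : Type} (F : list V) (g : V -> R) : R :=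
  fold_right (fun v acc => g v + acc) 0 F.
Definition sumC {V : Type} (F : list V) (g : V -> Cplx) : Cplx :=
  fold_right (fun v acc => Cadd (g v) acc) C0 F.

(** [g] is (unconditionally) summable over [V] with sum [s]: the net of
    finite partial sums (indexed by finite subsets, encoded as duplicate-free
    lists) converges to [s]. *)
Definition has_sumR {V : Type} (g : V -> R) (s : R) : Prop :=
  forall eps, 0 < eps ->
    exists F0 : list V, NoDup F0 /\
      forall F : list V, NoDup F -> incl F0 F -> Rabs (sumR F g - s) < eps.

Definition has_sumC {V : Type} (g : V -> Cplx) (s : Cplx) : Prop :=
  forall eps, 0 < eps ->
    exists F0 : list V, NoDup F0 /\
      forall F : list V, NoDup F -> incl F0 F ->
        Cnorm2 (Cadd (sumC F g) (Copp s)) < eps * eps.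

Definition l2 {V : Type} (f : V -> Cplx) : Prop :=
  exists s, has_sumR (fun v => Cnorm2 (f v)) s.

Definition norm_is {V : Type} (f : V -> Cplx) (r : R) : Prop :=
  0 <= r /\ has_sumR (fun v => Cnorm2 (f v)) (r * r).

Definition inner_is {V : Type} (f g : V -> Cplx) (s : Cplx) : Prop :=
  has_sumC (fun v => Cmul (f v) (Cconj (g v))) s.

Definition e_ {V : Type} (u : V) : V -> Cplx :=
  fun v => if excluded_middle_informative (v = u) then C1 else C0.

(** * Directed trees
    A directed graph in which every vertex has at most one parent is encoded
    by [par : V -> option V]; the edge set is E = {(u,v) | par v = Some u}.
    [par v = None] means v is the root (so V^o = {v | par v <> None}). *)
Definition Edge {V : Type} (par : V -> option V) : relation V :=
  fun u v => par v = Some u.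

Definition is_directed_tree {V : Type} (par : V -> option V) : Prop :=
  (forall u w : V, clos_refl_sym_trans V (Edge par) u w) /\
  (forall u : V, ~ clos_trans V (Edge par) u u).

Definition leafless {V : Type} (par : V -> option V) : Prop :=
  forall u : V, exists v : V, par v = Some u.

(** * Weighted shifts
    (S_lambda f)(v) = lambda_v f(par v) for v in V^o, and 0 at the root.
    Only the values of [lam] on V^o are relevant. *)
Definition wshift {V : Type} (par : V -> option V) (lam : V -> Cplx)
  (f : V -> Cplx) : V -> Cplx :=
  fun v => match par v with Some u => Cmul (lam v) (f u) | None => C0 end.

Definition bounded_op {V : Type} (S : (V -> Cplx) -> (V -> Cplx)) : Prop :=
  exists M : R, forall f, l2 f ->
    l2 (S f) /\ forall a b, norm_is f a -> norm_is (S f) b -> b <= M * a.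

(** [adj_val S f h] : h in l^2(V) is the value S^* f of the adjoint at f,
    i.e. <S g, f> = <g, h> for every g in l^2(V). *)
Definition adj_val {V : Type} (S : (V -> Cplx) -> (V -> Cplx)) (f h : V -> Cplx) : Prop :=
  l2 h /\ forall g, l2 g -> exists s, inner_is (S g) f s /\ inner_is g h s.

Definition in_ker_adj {V : Type} (S : (V -> Cplx) -> (V -> Cplx)) (f : V -> Cplx) : Prop :=
  l2 f /\ adj_val S f (fun _ => C0).

Definition adjS_S_preserves_ker {V : Type} (S : (V -> Cplx) -> (V -> Cplx)) : Prop :=
  forall f, in_ker_adj S f -> forall h, adj_val S (S f) h -> in_ker_adj S h.

Definition Vplus {V : Type} (S : (V -> Cplx) -> (V -> Cplx)) (u : V) : Prop :=
  exists r, norm_is (S (e_ u)) r /\ 0 < r.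

(** [S_lambda^* S_lambda] is diagonal in the basis [(e_u)], with entries
    [||S e_u||^2], while [<S g, f> = sum_p g(p) sum_{v in Chi(p)} lambda_v conj(f v)],
    so [f] lies in [ker S^*] exactly when every sibling family
    [(conj (f v))_{v in Chi(p)}] is orthogonal to [(lambda_v)_v].  Multiplying
    [f] by [||S e_v||^2] preserves all these relations precisely when
    [||S e_v||] is constant on the siblings with [lambda_v <> 0]: one direction
    factors the constant out, the other tests the vector
    [conj(lambda_w) e_u - conj(lambda_u) e_w] for two such siblings [u], [w]. *)
From Stdlib Require Import Reals Lra Psatz List Permutation Classical ClassicalEpsilon
  FunctionalExtensionality.
Import ListNotations.
Open Scope R_scope.

Ltac case_em := repeat match goal with
  | |- context [excluded_middle_informative ?P] => destruct (excluded_middle_informative P)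
  | H : context [excluded_middle_informative ?P] |- _ => destruct (excluded_middle_informative P)
  end.

Lemma Cplx_eq (z w : Cplx) : Re z = Re w -> Im z = Im w -> z = w.
Proof. destruct z, w; simpl; intros; subst; reflexivity. Qed.

Ltac Cring := apply Cplx_eq; simpl; unfold Cnorm2; simpl; ring.

Lemma Cnorm2_ge0 z : 0 <= Cnorm2 z.
Proof. unfold Cnorm2. nra. Qed.

Lemma Cnorm2_gt0 z : z <> C0 -> 0 < Cnorm2 z.
Proof.
  destruct z as [a b]; unfold Cnorm2; simpl; intros Hz.
  destruct (Req_dec a 0), (Req_dec b 0); subst; [now exfalso; apply Hz | nra ..].
Qed.

Lemma Cnorm2_mul z w : Cnorm2 (Cmul z w) = Cnorm2 z * Cnorm2 w.
Proof. unfold Cnorm2; simpl; ring. Qed.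

Section Summation.
Context {V : Type}.

Lemma sumR_app (F G : list V) g : sumR (F ++ G) g = sumR F g + sumR G g.
Proof. induction F; simpl; [lra | rewrite IHF; lra]. Qed.

Lemma sumR_perm (F G : list V) g : Permutation F G -> sumR F g = sumR G g.
Proof. induction 1; simpl; lra. Qed.

Lemma sumR_eq0 (F : list V) g : (forall v, In v F -> g v = 0) -> sumR F g = 0.
Proof. induction F; simpl; intros H; [lra|]. rewrite H, IHF by auto. lra. Qed.

Lemma sumR_ge0 (F : list V) g : (forall v, 0 <= g v) -> 0 <= sumR F g.
Proof. induction F; simpl; intros H; [lra|]. specialize (IHF H). specialize (H a). lra. Qed.

Lemma sumR_le (F : list V) g h : (forall v, g v <= h v) -> sumR F g <= sumR F h.
Proof. induction F; simpl; intros H; [lra|]. specialize (IHF H). specialize (H a). lra. Qed.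

Lemma sumR_add (F : list V) g h : sumR F (fun v => g v + h v) = sumR F g + sumR F h.
Proof. induction F; simpl; lra. Qed.

Lemma sumR_scale (F : list V) c g : sumR F (fun v => c * g v) = c * sumR F g.
Proof. induction F; simpl; [lra|]. rewrite IHF. ring. Qed.

Lemma NoDup_cover (l : list V) : exists H, NoDup H /\ forall x, In x H <-> In x l.
Proof.
  induction l as [|a l [H [HN HI]]].
  - exists []. split; [constructor | tauto].
  - destruct (classic (In a H)) as [Ha|Ha].
    + exists H. split; auto. intros x; simpl; rewrite HI. split; [tauto|].
      intros [->|?]; [apply HI in Ha|]; tauto.
    + exists (a :: H). split; [constructor; auto|]. intros x; simpl; rewrite HI; tauto.
Qed.

Lemma NoDup_upper_bound (F G : list V) : exists H, NoDup H /\ incl F H /\ incl G H.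
Proof.
  destruct (NoDup_cover (F ++ G)) as [H [HN HI]]. exists H.
  repeat split; auto; intros x Hx; apply HI; apply in_or_app; auto.
Qed.

Lemma NoDup_incl_complement (L F : list V) : NoDup L -> NoDup F -> incl L F ->
  exists R, Permutation F (L ++ R) /\ (forall v, In v R -> ~ In v L).
Proof.
  intros HL HF HI.
  set (p := fun x => if excluded_middle_informative (In x L) then false else true).
  assert (Hp : forall x, p x = true <-> ~ In x L) by (intros x; unfold p; case_em; split; tauto || discriminate).
  exists (filter p F). split.
  - apply NoDup_Permutation; auto.
    + apply NoDup_app; auto; [apply NoDup_filter; auto|].
      intros a Ha Hb. apply filter_In, proj2, Hp in Hb. tauto.
    + intros x. rewrite in_app_iff, filter_In, Hp.
      split; [|intros [H|[H _]]; [apply HI|]; auto].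
      intros Hx. destruct (classic (In x L)); tauto.
  - intros v Hv. apply filter_In, proj2, Hp in Hv. exact Hv.
Qed.

Lemma sumR_incl (L F : list V) g : (forall v, 0 <= g v) -> NoDup L -> NoDup F -> incl L F ->
  sumR L g <= sumR F g.
Proof.
  intros Hg HL HF HI. destruct (NoDup_incl_complement L F HL HF HI) as [R [HP _]].
  rewrite (sumR_perm _ _ g HP), sumR_app. pose proof (sumR_ge0 R g Hg). lra.
Qed.

Lemma has_sumR_unique (g : V -> R) s1 s2 : has_sumR g s1 -> has_sumR g s2 -> s1 = s2.
Proof.
  intros H1 H2. destruct (Req_dec s1 s2) as [|Hne]; auto. exfalso.
  assert (He : 0 < Rabs (s1 - s2) / 2).
  { assert (s1 - s2 <> 0) by lra. pose proof (Rabs_pos_lt _ H). lra. }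
  destruct (H1 _ He) as [F1 [N1 P1]], (H2 _ He) as [F2 [N2 P2]].
  destruct (NoDup_upper_bound F1 F2) as [H [NH [I1 I2]]].
  specialize (P1 H NH I1). specialize (P2 H NH I2).
  revert P1 P2. unfold Rdiv. split_Rabs; lra.
Qed.

Lemma has_sumR_finite (L : list V) g : NoDup L -> (forall v, ~ In v L -> g v = 0) ->
  has_sumR g (sumR L g).
Proof.
  intros HL Hz eps He. exists L. split; auto. intros F HF HI.
  destruct (NoDup_incl_complement L F HL HF HI) as [R [HP HR]].
  rewrite (sumR_perm _ _ g HP), sumR_app, (sumR_eq0 R) by (intros v Hv; apply Hz; auto).
  replace (sumR L g + 0 - sumR L g) with 0 by ring. rewrite Rabs_R0; auto.
Qed.

Lemma has_sumR_add (g h : V -> R) a b : has_sumR g a -> has_sumR h b ->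
  has_sumR (fun v => g v + h v) (a + b).
Proof.
  intros Hg Hh eps He.
  destruct (Hg (eps/2)) as [F1 [N1 P1]]; [lra|]. destruct (Hh (eps/2)) as [F2 [N2 P2]]; [lra|].
  destruct (NoDup_upper_bound F1 F2) as [H [NH [I1 I2]]]. exists H. split; auto.
  intros F NF IF. rewrite sumR_add.
  assert (A1 := P1 F NF (fun x Hx => IF x (I1 x Hx))).
  assert (A2 := P2 F NF (fun x Hx => IF x (I2 x Hx))).
  revert A1 A2. split_Rabs; lra.
Qed.

Lemma has_sumR_scale c (g : V -> R) a : has_sumR g a -> has_sumR (fun v => c * g v) (c * a).
Proof.
  intros Hg eps He.
  assert (Hc : 0 < Rabs c + 1) by (pose proof (Rabs_pos c); lra).
  destruct (Hg (eps / (Rabs c + 1))) as [F0 [N0 P0]]; [apply Rdiv_lt_0_compat; lra|].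
  exists F0. split; auto. intros F NF IF. specialize (P0 F NF IF).
  rewrite sumR_scale. replace (c * sumR F g - c * a) with (c * (sumR F g - a)) by ring.
  rewrite Rabs_mult.
  assert (Rabs (sumR F g - a) * (Rabs c + 1) < eps).
  { apply (Rmult_lt_compat_r (Rabs c + 1)) in P0; auto.
    unfold Rdiv in P0. rewrite Rmult_assoc, Rinv_l in P0; lra. }
  pose proof (Rabs_pos c). pose proof (Rabs_pos (sumR F g - a)). nra.
Qed.

Lemma has_sumR_ext (g h : V -> R) s : (forall v, g v = h v) -> has_sumR g s -> has_sumR h s.
Proof. intros E. replace h with g; auto. apply functional_extensionality; auto. Qed.

Lemma has_sumR_ge_sumR (g : V -> R) s : (forall v, 0 <= g v) -> has_sumR g s ->
  forall F, NoDup F -> sumR F g <= s.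
Proof.
  intros Hg Hs F NF. apply Rnot_lt_le. intros Hlt.
  destruct (Hs (sumR F g - s)) as [F0 [N0 P0]]; [lra|].
  destruct (NoDup_upper_bound F F0) as [H [NH [I1 I2]]].
  specialize (P0 H NH I2). pose proof (sumR_incl F H g Hg NF NH I1).
  revert P0. split_Rabs; lra.
Qed.

Lemma has_sumR_ge0 (g : V -> R) s : (forall v, 0 <= g v) -> has_sumR g s -> 0 <= s.
Proof. intros Hg Hs. exact (has_sumR_ge_sumR g s Hg Hs [] (NoDup_nil _)). Qed.

Lemma has_sumR_ge_term (g : V -> R) s : (forall v, 0 <= g v) -> has_sumR g s ->
  forall v, g v <= s.
Proof.
  intros Hg Hs v. pose proof (has_sumR_ge_sumR g s Hg Hs [v] (NoDup_cons _ (@in_nil _ v) (NoDup_nil _))).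
  simpl in H. lra.
Qed.

(* The sum is the supremum of the finite partial sums, which exists by completeness. *)
Lemma has_sumR_dominated (a b : V -> R) s : (forall v, 0 <= a v <= b v) -> has_sumR b s ->
  exists t, has_sumR a t.
Proof.
  intros Hab Hb.
  set (E := fun x => exists F, NoDup F /\ x = sumR F a).
  assert (Hbd : bound E).
  { exists s. intros x [F [NF ->]].
    apply Rle_trans with (sumR F b); [apply sumR_le; intros; apply Hab|].
    apply has_sumR_ge_sumR; auto. intros v; specialize (Hab v); lra. }
  assert (Hne : exists x, E x) by (exists 0, []; split; [constructor | reflexivity]).
  destruct (completeness E Hbd Hne) as [m [Hub Hlub]].
  exists m. intros eps He.
  assert (exists F, NoDup F /\ m - eps < sumR F a) as [F1 [N1 P1]].
  { apply NNPP. intros Hn. assert (m <= m - eps); [|lra].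
    apply Hlub. intros x [F [NF ->]]. apply Rnot_lt_le. intros Hl. apply Hn. eauto. }
  exists F1. split; auto. intros F NF IF.
  assert (sumR F1 a <= sumR F a) by (apply sumR_incl; auto; intros v; apply Hab).
  assert (sumR F a <= m) by (apply Hub; exists F; auto).
  split_Rabs; lra.
Qed.

Lemma Re_sumC (F : list V) g : Re (sumC F g) = sumR F (fun v => Re (g v)).
Proof. induction F; simpl; auto. rewrite IHF; auto. Qed.

Lemma Im_sumC (F : list V) g : Im (sumC F g) = sumR F (fun v => Im (g v)).
Proof. induction F; simpl; auto. rewrite IHF; auto. Qed.

Lemma sumC_indicator (L : list V) q (F : V -> Cplx) : NoDup L ->
  sumC L (fun x => if excluded_middle_informative (x = q) then F x else C0) =
  if excluded_middle_informative (In q L) then F q else C0.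
Proof.
  induction 1 as [|x L HxL _ IH]; simpl; [case_em; tauto|].
  rewrite IH. case_em; subst; try tauto; Cring.
Qed.

Lemma Rabs_lt_sqr x eps : 0 < eps -> (Rabs x < eps <-> x * x < eps * eps).
Proof. intros He. split_Rabs; split; intros; nra. Qed.

Lemma has_sumC_iff (g : V -> Cplx) s : has_sumC g s <->
  has_sumR (fun v => Re (g v)) (Re s) /\ has_sumR (fun v => Im (g v)) (Im s).
Proof.
  unfold has_sumC, has_sumR, Cnorm2. split.
  - intros H. split; intros eps He; destruct (H eps He) as [F0 [N0 P0]];
      exists F0; split; auto; intros F NF IF; specialize (P0 F NF IF);
      simpl in P0; rewrite Re_sumC, Im_sumC in P0; apply Rabs_lt_sqr; auto;
      match type of P0 with ?a * ?a + ?b * ?b < _ =>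
        pose proof (Rle_0_sqr a); pose proof (Rle_0_sqr b); unfold Rsqr in *; lra end.
  - intros [H1 H2] eps He.
    destruct (H1 (eps/2)) as [F1 [N1 P1]]; [lra|]. destruct (H2 (eps/2)) as [F2 [N2 P2]]; [lra|].
    destruct (NoDup_upper_bound F1 F2) as [H [NH [I1 I2]]]. exists H. split; auto.
    intros F NF IF.
    assert (A1 := P1 F NF (fun x Hx => IF x (I1 x Hx))).
    assert (A2 := P2 F NF (fun x Hx => IF x (I2 x Hx))).
    apply Rabs_lt_sqr in A1, A2; try lra.
    simpl. rewrite Re_sumC, Im_sumC. nra.
Qed.

Lemma has_sumC_unique (g : V -> Cplx) s1 s2 : has_sumC g s1 -> has_sumC g s2 -> s1 = s2.
Proof.
  rewrite !has_sumC_iff. intros [A1 B1] [A2 B2].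
  apply Cplx_eq; eapply has_sumR_unique; eauto.
Qed.

Lemma has_sumC_ext (g h : V -> Cplx) s : (forall v, g v = h v) -> has_sumC g s -> has_sumC h s.
Proof. intros E. replace h with g; auto. apply functional_extensionality; auto. Qed.

Lemma has_sumC_finite (L : list V) g : NoDup L -> (forall v, ~ In v L -> g v = C0) ->
  has_sumC g (sumC L g).
Proof.
  intros HL Hz. apply has_sumC_iff. rewrite Re_sumC, Im_sumC.
  split; apply has_sumR_finite; auto; intros v Hv; rewrite Hz; auto.
Qed.

Lemma has_sumC_add (g h : V -> Cplx) a b : has_sumC g a -> has_sumC h b ->
  has_sumC (fun v => Cadd (g v) (h v)) (Cadd a b).
Proof.
  rewrite !has_sumC_iff. intros [A1 B1] [A2 B2]. simpl.
  split; [exact (has_sumR_add _ _ _ _ A1 A2) | exact (has_sumR_add _ _ _ _ B1 B2)].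
Qed.

Lemma has_sumC_sumC {I : Type} (L : list I) (G : I -> V -> Cplx) (s : I -> Cplx) :
  (forall i, In i L -> has_sumC (G i) (s i)) ->
  has_sumC (fun v => sumC L (fun i => G i v)) (sumC L s).
Proof.
  induction L as [|i L IH]; simpl; intros H.
  - exact (has_sumC_finite [] _ (NoDup_nil _) (fun _ _ => eq_refl)).
  - apply has_sumC_add; auto.
Qed.

Lemma has_sumC_real_scale (phi : V -> R) a z : has_sumR phi a ->
  has_sumC (fun v => Cmul (mkC (phi v) 0) z) (Cmul (mkC a 0) z).
Proof.
  intros H. apply has_sumC_iff. simpl. split.
  - apply (has_sumR_ext (fun v => Re z * phi v)); [intros; ring|].
    replace (a * Re z - 0 * Im z) with (Re z * a) by ring. apply has_sumR_scale; auto.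
  - apply (has_sumR_ext (fun v => Im z * phi v)); [intros; ring|].
    replace (a * Im z + 0 * Re z) with (Im z * a) by ring. apply has_sumR_scale; auto.
Qed.

End Summation.

Section Hilbert.
Context {V : Type}.

Lemma norm_is_e (u : V) : norm_is (e_ u) 1.
Proof.
  split; [lra|]. replace (1 * 1) with (sumR [u] (fun v => Cnorm2 (e_ u v))).
  - apply has_sumR_finite; [repeat constructor; simpl; tauto|].
    intros v Hv. unfold e_. case_em; [subst; simpl in Hv; tauto | unfold Cnorm2; simpl; ring].
  - simpl. unfold e_. case_em; [|congruence]. unfold Cnorm2; simpl; ring.
Qed.

Lemma l2_of_norm_is (f : V -> Cplx) r : norm_is f r -> l2 f.
Proof. intros [_ H]. eexists; eauto. Qed.

Lemma l2_e (u : V) : l2 (e_ u).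
Proof. exact (l2_of_norm_is _ _ (norm_is_e u)). Qed.

Lemma norm_is_of_l2 (f : V -> Cplx) : l2 f -> exists r, norm_is f r.
Proof.
  intros [s Hs]. assert (0 <= s) by (eapply has_sumR_ge0; [intros; apply Cnorm2_ge0 | eauto]).
  exists (sqrt s). split; [apply sqrt_pos|]. rewrite sqrt_sqrt; auto.
Qed.

Lemma norm_is_unique (f : V -> Cplx) r1 r2 : norm_is f r1 -> norm_is f r2 -> r1 = r2.
Proof. intros [P1 H1] [P2 H2]. pose proof (has_sumR_unique _ _ _ H1 H2). nra. Qed.

Lemma l2_finite (f : V -> Cplx) L : NoDup L -> (forall x, ~ In x L -> f x = C0) -> l2 f.
Proof.
  intros ND Hz. eexists. apply has_sumR_finite; eauto.
  intros v Hv. rewrite Hz; auto. unfold Cnorm2; simpl; ring.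
Qed.

Lemma l2_C0 : l2 (fun _ : V => C0).
Proof. exact (l2_finite _ [] (NoDup_nil _) (fun _ _ => eq_refl)). Qed.

Lemma l2_real_scale (c : V -> R) K (g : V -> Cplx) : (forall v, 0 <= c v <= K) -> l2 g ->
  l2 (fun v => Cmul (mkC (c v) 0) (g v)).
Proof.
  intros Hc [s Hs].
  assert (Hdom : forall v, 0 <= Cnorm2 (Cmul (mkC (c v) 0) (g v)) <= K * K * Cnorm2 (g v)).
  { intros v. specialize (Hc v). pose proof (Cnorm2_ge0 (g v)).
    replace (Cnorm2 (Cmul (mkC (c v) 0) (g v))) with (c v * c v * Cnorm2 (g v))
      by (unfold Cnorm2; simpl; ring).
    split; [nra|]. apply Rmult_le_compat_r; nra. }
  exact (has_sumR_dominated _ _ _ Hdom (has_sumR_scale _ _ _ Hs)).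
Qed.

Lemma inner_is_finite_r (g1 g2 : V -> Cplx) L : NoDup L -> (forall x, ~ In x L -> g2 x = C0) ->
  inner_is g1 g2 (sumC L (fun v => Cmul (g1 v) (Cconj (g2 v)))).
Proof. intros ND Hz. apply has_sumC_finite; auto. intros v Hv. rewrite Hz; auto. Cring. Qed.

Lemma inner_is_finite_l (g1 g2 : V -> Cplx) L : NoDup L -> (forall x, ~ In x L -> g1 x = C0) ->
  inner_is g1 g2 (sumC L (fun v => Cmul (g1 v) (Cconj (g2 v)))).
Proof. intros ND Hz. apply has_sumC_finite; auto. intros v Hv. rewrite Hz; auto. Cring. Qed.

Lemma inner_is_C0_r (g : V -> Cplx) : inner_is g (fun _ => C0) C0.
Proof. exact (inner_is_finite_r g _ [] (NoDup_nil _) (fun _ _ => eq_refl)). Qed.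

Lemma in_ker_adj_iff (S : (V -> Cplx) -> V -> Cplx) f : in_ker_adj S f <->
  l2 f /\ forall g, l2 g -> inner_is (S g) f C0.
Proof.
  split.
  - intros [Hf [_ H]]. split; auto. intros g Hg. destruct (H g Hg) as [s [H1 H2]].
    rewrite (has_sumC_unique _ _ _ H2 (inner_is_C0_r g)) in H1. exact H1.
  - intros [Hf H]. split; [|split]; auto using l2_C0.
    intros g Hg. exists C0. split; auto using inner_is_C0_r.
Qed.

End Hilbert.

Section WeightedShift.
Context {V : Type} (par : V -> option V) (lam : V -> Cplx).
Notation S := (wshift par lam).

Lemma Cnorm2_wshift_e (u v : V) :
  Cnorm2 (S (e_ u) v) = if excluded_middle_informative (par v = Some u) then Cnorm2 (lam v) else 0.
Proof.
  unfold wshift, e_, Cnorm2. destruct (par v) as [q|]; case_em; subst; try congruence;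
    simpl; ring.
Qed.

Hypothesis Hbdd : bounded_op S.

Lemma ex_norm_wshift_e (u : V) : exists r, norm_is (S (e_ u)) r.
Proof. destruct Hbdd as [M HM]. apply norm_is_of_l2, HM, l2_e. Qed.

Definition shift_norm (u : V) : R :=
  proj1_sig (constructive_indefinite_description _ (ex_norm_wshift_e u)).

Lemma shift_normP (u : V) : norm_is (S (e_ u)) (shift_norm u).
Proof. exact (proj2_sig (constructive_indefinite_description _ (ex_norm_wshift_e u))). Qed.

Lemma shift_norm_bounded : exists K, forall u, 0 <= shift_norm u <= K.
Proof.
  destruct Hbdd as [M HM]. exists M. intros u. pose proof (shift_normP u) as Hn.
  split; [apply Hn|]. destruct (HM (e_ u) (l2_e u)) as [_ HB].
  specialize (HB 1 (shift_norm u) (norm_is_e u) Hn). lra.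
Qed.

Lemma Vplus_parent (u p : V) : par u = Some p -> lam u <> C0 -> Vplus S p.
Proof.
  intros Hp Hl. exists (shift_norm p). split; [apply shift_normP|].
  destruct (shift_normP p) as [[Hn|Hn] Hsum]; auto. exfalso.
  pose proof (has_sumR_ge_term _ _ (fun v => Cnorm2_ge0 _) Hsum u) as Hu; simpl in Hu.
  rewrite Cnorm2_wshift_e in Hu. case_em; [|congruence].
  pose proof (Cnorm2_gt0 _ Hl). rewrite <- Hn in Hu. lra.
Qed.

Lemma inner_wshift_e (u : V) (f : V -> Cplx) :
  inner_is (S (e_ u)) (S f) (Cmul (mkC (shift_norm u * shift_norm u) 0) (Cconj (f u))).
Proof.
  eapply has_sumC_ext; [| exact (has_sumC_real_scale _ _ _ (proj2 (shift_normP u)))].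
  intros v. unfold wshift, e_. destruct (par v) as [q|]; case_em; subst; try congruence; Cring.
Qed.

Lemma adj_val_wshift_S (f h : V -> Cplx) : adj_val S (S f) h ->
  forall u, h u = Cmul (mkC (shift_norm u * shift_norm u) 0) (f u).
Proof.
  intros [_ Hadj] u. destruct (Hadj (e_ u) (l2_e u)) as [s [H1 H2]].
  rewrite (has_sumC_unique _ _ _ H1 (inner_wshift_e u f)) in H2.
  assert (Hu : NoDup [u]) by (repeat constructor; simpl; tauto).
  pose proof (has_sumC_unique _ _ _ H2 (inner_is_finite_l (e_ u) h [u] Hu
    ltac:(intros x Hx; unfold e_; case_em; [subst; simpl in Hx; tauto | reflexivity]))) as E.
  simpl in E. unfold e_ in E. case_em; [|congruence].
  destruct (h u) as [h1 h2], (f u) as [f1 f2].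
  pose proof (f_equal Re E) as E1. pose proof (f_equal Im E) as E2. simpl in E1, E2.
  apply Cplx_eq; simpl; lra.
Qed.

Lemma adj_val_wshift_S_finite (f : V -> Cplx) L : NoDup L -> (forall x, ~ In x L -> f x = C0) ->
  adj_val S (S f) (fun x => Cmul (mkC (shift_norm x * shift_norm x) 0) (f x)).
Proof.
  intros ND Hz. split.
  { apply (l2_finite _ L ND). intros x Hx. rewrite Hz; auto. Cring. }
  intros g _. eexists. split; [| apply (inner_is_finite_r _ _ L ND); intros x Hx; rewrite Hz; auto; Cring].
  eapply has_sumC_ext; [| apply (has_sumC_sumC L
    (fun x v => Cmul (mkC (Cnorm2 (S (e_ x) v)) 0) (Cmul (g x) (Cconj (f x)))))].
  - intros v. simpl.
    replace (fun x => Cmul (mkC (Cnorm2 (S (e_ x) v)) 0) (Cmul (g x) (Cconj (f x)))) with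
      (fun x => match par v with
                | Some q => if excluded_middle_informative (x = q)
                            then Cmul (S g v) (Cconj (S f v)) else C0
                | None => C0 end).
    2:{ apply functional_extensionality; intros x. rewrite Cnorm2_wshift_e.
        unfold wshift. destruct (par v) as [q|]; case_em; subst; try congruence; Cring. }
    destruct (par v) as [q|] eqn:E.
    + rewrite sumC_indicator by exact ND. case_em; auto.
      unfold wshift. rewrite E, Hz by auto. Cring.
    + unfold wshift. rewrite E. transitivity C0; [|Cring].
      apply Cplx_eq; rewrite ?Re_sumC, ?Im_sumC; apply sumR_eq0; reflexivity.
  - intros x _. simpl.
    replace (Cmul (g x) (Cconj (Cmul (mkC (shift_norm x * shift_norm x) 0) (f x))))
      with (Cmul (mkC (shift_norm x * shift_norm x) 0) (Cmul (g x) (Cconj (f x)))) by Cring.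
    exact (has_sumC_real_scale _ _ _ (proj2 (shift_normP x))).
Qed.

Definition equal_sibling_norms : Prop :=
  forall u w p, par u = Some p -> par w = Some p -> lam u <> C0 -> lam w <> C0 ->
    shift_norm u = shift_norm w.

Lemma equal_sibling_norms_of_preserves : adjS_S_preserves_ker S -> equal_sibling_norms.
Proof.
  intros HP u w p Hu Hw Lu Lw. destruct (classic (u = w)) as [->|Huw]; [reflexivity|].
  set (f := fun x => if excluded_middle_informative (x = u) then Cconj (lam w)
     else if excluded_middle_informative (x = w) then Copp (Cconj (lam u)) else C0).
  set (h := fun x => Cmul (mkC (shift_norm x * shift_norm x) 0) (f x)).
  assert (ND : NoDup [u; w]) by (repeat constructor; simpl; intuition).
  assert (fz : forall x, ~ In x [u; w] -> f x = C0).
  { intros x Hx. unfold f. case_em; subst; simpl in Hx; intuition. }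
  assert (hz : forall x, ~ In x [u; w] -> h x = C0) by (intros x Hx; unfold h; rewrite fz; auto; Cring).
  assert (fu : f u = Cconj (lam w)) by (unfold f; case_em; congruence).
  assert (fw : f w = Copp (Cconj (lam u))) by (unfold f; case_em; congruence).
  clearbody f.
  assert (Hker : in_ker_adj S f).
  { apply in_ker_adj_iff. split; [exact (l2_finite f _ ND fz)|]. intros g _.
    replace C0 with (sumC [u; w] (fun v => Cmul (S g v) (Cconj (f v))))
      by (simpl; rewrite fu, fw; unfold wshift; rewrite Hu, Hw; Cring).
    exact (inner_is_finite_r _ _ _ ND fz). }
  destruct (proj1 (in_ker_adj_iff _ _) (HP f Hker _ (adj_val_wshift_S_finite f _ ND fz))) as [_ Hh].
  pose proof (has_sumC_unique _ _ _ (Hh (e_ p) (l2_e p)) (inner_is_finite_r _ h _ ND hz)) as E.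
  simpl in E. unfold h in E. rewrite fu, fw in E. unfold wshift, e_ in E. rewrite Hu, Hw in E.
  case_em; try congruence.
  set (d := shift_norm u * shift_norm u - shift_norm w * shift_norm w).
  assert (Hdiff : Cmul (mkC d 0) (Cmul (lam u) (lam w)) = C0) by (rewrite E; unfold d; Cring).
  apply (f_equal Cnorm2) in Hdiff. rewrite !Cnorm2_mul in Hdiff.
  replace (Cnorm2 (mkC d 0)) with (d * d) in Hdiff by (unfold Cnorm2; simpl; ring).
  replace (Cnorm2 C0) with 0 in Hdiff by (unfold Cnorm2; simpl; ring).
  pose proof (Cnorm2_gt0 _ Lu). pose proof (Cnorm2_gt0 _ Lw).
  apply Rmult_integral in Hdiff as [Hd|Hd]; [|nra].
  apply Rsqr_inj; [apply (shift_normP u) | apply (shift_normP w) | unfold Rsqr, d in *; nra].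
Qed.

Definition parent_norm (p : V) : R :=
  match excluded_middle_informative (exists u, par u = Some p /\ lam u <> C0) with
  | left H => shift_norm (proj1_sig (constructive_indefinite_description _ H))
  | right _ => 0
  end.

Lemma parent_norm_bounded : exists K, forall p, 0 <= parent_norm p <= K.
Proof.
  destruct shift_norm_bounded as [K HK]. exists K. intros p. unfold parent_norm. case_em.
  - apply HK.
  - specialize (HK p). lra.
Qed.

Lemma parent_normP : equal_sibling_norms ->
  forall u p, par u = Some p -> lam u <> C0 -> parent_norm p = shift_norm u.
Proof.
  intros Heq u p Hp Hl. unfold parent_norm. case_em.
  - destruct (constructive_indefinite_description _ _) as [u0 [H1 H2]]; simpl. eauto.
  - exfalso. eauto.
Qed.

Lemma equal_sibling_norms_of_parent_function (gam : V -> R) :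
  (forall u p, par u = Some p -> lam u <> C0 -> norm_is (S (e_ u)) (gam p)) ->
  equal_sibling_norms.
Proof.
  intros Hg u w p Hu Hw Lu Lw.
  now rewrite (norm_is_unique _ _ _ (shift_normP u) (Hg u p Hu Lu)),
              (norm_is_unique _ _ _ (shift_normP w) (Hg w p Hw Lw)).
Qed.

Lemma norm_is_parent_norm : equal_sibling_norms ->
  forall u p, par u = Some p -> lam u <> C0 -> norm_is (S (e_ u)) (parent_norm p).
Proof. intros Heq u p Hp Hl. rewrite (parent_normP Heq u p Hp Hl). apply shift_normP. Qed.

(* Sibling norms factor out of [<S g, S^* S f>] as a function of the parent, giving [<S g', f>]. *)
Lemma preserves_of_equal_sibling_norms : equal_sibling_norms -> adjS_S_preserves_ker S.
Proof.
  intros Heq f Hf h Hh. apply in_ker_adj_iff in Hf as [_ Hf].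
  apply in_ker_adj_iff. split; [exact (proj1 Hh)|]. intros g Hg.
  destruct parent_norm_bounded as [K HK].
  set (g' := fun p => Cmul (mkC (parent_norm p * parent_norm p) 0) (g p)).
  assert (Hg' : l2 g').
  { apply (l2_real_scale _ (K * K) g); auto. intros p. specialize (HK p). split; nra. }
  eapply has_sumC_ext; [| exact (Hf g' Hg')]. intros v. unfold wshift, g'.
  destruct (par v) as [p|] eqn:E; [|Cring].
  rewrite (adj_val_wshift_S f h Hh v).
  destruct (classic (lam v = C0)) as [Z|Z]; [rewrite Z; Cring|].
  rewrite (parent_normP Heq v p E Z). Cring.
Qed.

End WeightedShift.

Theorem mainTheorem13 (V : Type) (par : V -> option V) (lam : V -> Cplx)
  (Htree : is_directed_tree par)
  (Hbdd : bounded_op (wshift par lam)) :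
  (adjS_S_preserves_ker (wshift par lam) <->
   exists alpha : {v : V | Vplus (wshift par lam) v} -> R,
     (forall w, 0 <= alpha w) /\
     forall (u p : V) (Hp : par u = Some p), lam u <> C0 ->
       forall Hpl : Vplus (wshift par lam) p,
         norm_is (wshift par lam (e_ u)) (alpha (exist _ p Hpl)))
  /\
  (leafless par -> (forall v, par v <> None -> lam v <> C0) ->
   (adjS_S_preserves_ker (wshift par lam) <->
    exists alpha : V -> R,
      (forall v, 0 <= alpha v) /\
      forall u p : V, par u = Some p ->
        norm_is (wshift par lam (e_ u)) (alpha p))).
Proof.
  destruct (parent_norm_bounded par lam Hbdd) as [K HK].
  pose proof (equal_sibling_norms_of_preserves par lam Hbdd) as Hfwd.
  pose proof (preserves_of_equal_sibling_norms par lam Hbdd) as Hback.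
  split.
  - split.
    + intros HP. exists (fun p => parent_norm par lam Hbdd (proj1_sig p)).
      split; [intros; apply HK|]. intros u p Hp Hl Hpl; simpl.
      exact (norm_is_parent_norm par lam Hbdd (Hfwd HP) u p Hp Hl).
    + intros [alpha [_ Ha]]. apply Hback.
      apply (equal_sibling_norms_of_parent_function par lam Hbdd (fun p =>
        match excluded_middle_informative (Vplus (wshift par lam) p) with
        | left H => alpha (exist _ p H) | right _ => 0 end)).
      intros u p Hp Hl. case_em; [apply Ha; auto | exfalso; eauto using Vplus_parent].
  - intros _ Hnz. split.
    + intros HP. exists (parent_norm par lam Hbdd). split; [intros; apply HK|].
      intros u p Hp. apply (norm_is_parent_norm par lam Hbdd (Hfwd HP) u p Hp).
      apply Hnz. congruence.
    + intros [alpha [_ Ha]]. apply Hback, (equal_sibling_norms_of_parent_function par lam Hbdd alpha).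
      auto.
Qed.
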